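(* Let $k$ be a field with a non-archimedean absolute value $v:k\to\mathbb T$. Let $A_0$ be the monoid (with an adjoined zero) of an affine toric $k$-variety $\operatorname{Spec}k[A_0]^+$, let $R$ be a $k$-algebra and $\pi:k[A_0]^+\to R$ a surjective $k$-algebra homomorphism (a closed embedding $\iota:Y=\operatorname{Spec}R\to\operatorname{Spec}k[A_0]^+$). Let $B$ be the blueprint with $B^+=R$ (trivially ordered) and $B^\bullet=\{\pi(c\,a): c\in k,\ a\in A_0\}$, and let $\beta:B\to R$ be the inclusion (with $R$ viewed as the trivially ordered blueprint with $R^\bullet=R^+=R$). Then: (1) the Berkovich space $Y^{\mathrm{an}}$ is naturally homeomorphic to $\mathrm{Hom}_{\mathbb T}(\mathrm{Bend}_v(R),\mathbb T)$, via $w\mapsto (r\otimes t\mapsto w(r)t)$; (2) the Kajiwara–Payne tropicalization $\mathrm{Trop}^{KP}_{v,\iota}(Y)$ is naturally homeomorphic to $\mathrm{Hom}_{\mathbb T}(\mathrm{Bend}_v(B),\mathbb T)$, via the map sending $f:\mathrm{Bend}_v(B)\to\mathbb T$ to the monoid morphism $a\mapsto f(\pi(a)\otimes1)$; (3) the square whose top arrow is $\mathrm{trop}^{KP}_{v,\iota}:Y^{\mathrm{an}}\to\mathrm{Trop}^{KP}_{v,\iota}(Y)$, whose vertical arrows are these homeomorphisms and whose bottom arrow is precomposition with $\mathrm{Bend}_v(\beta):\mathrm{Bend}_v(B)\to\mathrm{Bend}_v(R)$, is a commutative diagram of continuous maps.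
   Context: $\mathbb T$ (tropical numbers) is the semiring $\mathbb R_{\ge0}$ with usual multiplication and addition $a+b=\max\{a,b\}$, with the real topology. A non-archimedean absolute value $v:k\to\mathbb T$ is a multiplicative map with $v(0)=0$, $v(1)=1$, $v(a+b)\le\max\{v(a),v(b)\}$. $k[A_0]^+$ denotes the monoid algebra of $A_0$ over $k$ with the zero of $A_0$ identified with $0$. Berkovich space: $Y^{\mathrm{an}}$ is the set of multiplicative maps $w:R\to\mathbb R_{\ge0}$ with $w(0)=0$, $w(1)=1$, $w(a+b)\le\max\{w(a),w(b)\}$ and $w|_k=v$, with the coarsest topology making all $w\mapsto w(r)$ ($r\in R$) continuous. $\mathrm{Hom}(A_0,\mathbb T)$ is the set of monoid morphisms preserving $0$ and $1$, with the topology of pointwise convergence; $\mathrm{trop}^{KP}_{v,\iota}(w)=(a\mapsto w(\pi(a)))$ and $\mathrm{Trop}^{KP}_{v,\iota}(Y)$ is its image with the subspace topology. Ordered blueprints: pairs of an ordered semiring $B^+$ (commutative, partial order compatible with $+$ and $\cdot$) and a multiplicatively closed generating subset $B^\bullet\ni0,1$; morphisms are order-preserving semiring homomorphisms preserving $\bullet$. Rings/semirings are viewed as trivially ordered with $R^\bullet=R$; $k$ is a $k$-algebra, $\mathbb T$ an ordered blue $\mathbb T$-algebra. The valuation $v$ is a valuation in the sense: multiplicative map on underlying monoids with $a\le \sum b_j$ implying $v(a)\le\sum v(b_j)$ in the natural order of $\mathbb T$. For an ordered blue $k$-algebra $C$, $\mathrm{Bend}_v(C)$ is the ordered blue $\mathbb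 T$-algebra with underlying monoid $C^\bullet\otimes_{k^\bullet}\mathbb T$ (elements $c\otimes t$, $(\lambda c)\otimes t=c\otimes v(\lambda)t$ for $\lambda\in k$) and semiring the quotient of $\mathbb T[C^\bullet]^+$ by the congruence generated by $(v(\lambda)t)\cdot c=t\cdot(\lambda c)$ and $t a+\sum_j t b_j=\sum_j t b_j$ whenever $a\le\sum b_j$ in $C^+$. $\mathrm{Hom}_{\mathbb T}(\mathrm{Bend}_v(C),\mathbb T)$ (the $\mathbb T$-rational points of $\operatorname{Spec}\mathrm{Bend}_v(C)$) carries the coarsest topology making all evaluation maps $f\mapsto f(x)$ continuous. *)

From mathcomp Require Import all_boot all_order all_algebra.
From mathcomp Require Import all_classical all_reals all_analysis.

Set Implicit Arguments.
Unset Strict Implicit.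
Unset Printing Implicit Defensive.

Import Order.TTheory GRing.Theory Num.Theory.
Import numFieldTopology.Exports numFieldNormedType.Exports.
Local Open Scope classical_set_scope.
Local Open Scope ring_scope.

(** The tropical numbers T = R_{>=0} with max and times are represented inside a real
   field [K : realType] as the nonnegative elements; the semiring addition of T
   is [Num.max]; the topology is the (subspace) real topology.             *)

Definition homeo_on (X Y : topologicalType) (A : set X) (B : set Y)
    (f : X -> Y) : Prop :=
  (forall x, A x -> B (f x)) /\
  exists g : Y -> X,
    [/\ (forall y, B y -> A (g y)),
        (forall x, A x -> g (f x) = x),
        (forall y, B y -> f (g y) = y),
        {within A, continuous f} &
        {within B, continuous g}].

Definition nonarch_abs (K : realType) (k : fieldType) (v : k -> K) : Prop :=
  [/\ forall a, 0 <= v a,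
      v 0 = 0, v 1 = 1,
      (forall a b, v (a * b) = v a * v b) &
      (forall a b, v (a + b) <= Num.max (v a) (v b))].

(** A is the affine monoid (finitely generated submonoid of the lattice Z^n,
   written additively) generated by [gens]; A_0 = A u {0} is modelled as
   [option 'rV[int]_n] with [None] the adjoined (absorbing) zero. *)
Inductive inA (n : nat) (gens : seq 'rV[int]_n) : 'rV[int]_n -> Prop :=
| inA_0 : inA gens 0
| inA_S a g : inA gens a -> g \in gens -> inA gens (a + g).

Definition inA0 n (gens : seq 'rV[int]_n) (x : option 'rV[int]_n) : Prop :=
  if x is Some a then inA gens a else True.

Definition A0 n (gens : seq 'rV[int]_n) := {x : option 'rV[int]_n | inA0 gens x}.

(* the monoid law of A_0 (written multiplicatively in the paper) *)
Definition mulA0 n (x y : option 'rV[int]_n) : option 'rV[int]_n :=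
  match x, y with Some a, Some b => Some (a + b) | _, _ => None end.
Definition oneA0 n : option 'rV[int]_n := Some 0.

(** A commutative ring P with a ring map [iP : k -> P] (k-algebra structure),
   and a map [e : A_0 -> P] which is a morphism of monoids with zero into
   the multiplicative monoid of P, such that the e(a), a in A, form a k-basis of P. *)
Definition is_monoid_algebra (k : fieldType) (P : comPzRingType)
    (iP : {rmorphism k -> P}) n (gens : seq 'rV[int]_n) (e : A0 gens -> P) :=
  [/\ (forall x : A0 gens, proj1_sig x = None -> e x = 0),
      (forall x : A0 gens, proj1_sig x = oneA0 n -> e x = 1),
      (forall x y z : A0 gens, proj1_sig z = mulA0 (proj1_sig x) (proj1_sig y) -> e z = e x * e y),
      (forall p : P, exists (s : seq (A0 gens)) (c : A0 gens -> k),
          p = \sum_(a <- s) iP (c a) * e a) &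
      (forall (s : seq (A0 gens)) (c : A0 gens -> k),
          uniq (map (@proj1_sig _ _) s) -> (forall a, a \in map (@proj1_sig _ _) s -> a != None) ->
          \sum_(a <- s) iP (c a) * e a = 0 -> all (fun a => c a == 0) s)].

Definition berk (K : realType) (k : fieldType) (v : k -> K) (R : comPzRingType)
    (iR : {rmorphism k -> R}) (w : {ptws R -> K}) : Prop :=
  (forall r, 0 <= w r) /\
  w 0 = 0 /\ w 1 = 1 /\
  (forall a b, w (a * b) = w a * w b) /\
  (forall a b, w (a + b) <= Num.max (w a) (w b)) /\
  (forall c, w (iR c) = v c).

Definition tropKP (K : realType) (R : comPzRingType) (P : comPzRingType)
    (pi : P -> R) n (gens : seq 'rV[int]_n) (e : A0 gens -> P)
    (w : {ptws R -> K}) : {ptws A0 gens -> K} :=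
  fun a => w (pi (e a)).

(** * Bend_v(C) for the ordered blue k-algebra C with C^+ = R (trivially
   ordered) and C^bullet = M (a multiplicatively closed k^bullet-stable
   generating subset of R containing 0 and 1).

   Elements of the monoid semiring T[M]^+ are represented by finite formal
   sums  sum_i t_i [m_i]  (lists of pairs (t_i, m_i), t_i in T, m_i in M);
   [++] is the sum and [fsmul] the product.  [bcong] is the congruence on
   T[M]^+ making lists into T[M]^+ (commutativity, t[m]+s[m] = (t+s)[m],
   0[m] = 0) together with the congruence generated by the Bend relations
   (v(lam) t)[c] = t[lam c]   and   t[a] + sum_j t[b_j] = sum_j t[b_j]
   whenever a <= sum_j b_j in C^+ (i.e. a = sum_j b_j, C^+ trivially ordered).
*)
Section Bend.
Variables (K : realType) (k : fieldType) (v : k -> K) (R : comPzRingType)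
          (iR : {rmorphism k -> R}) (M : set R).

Definition fsum := seq (K * R).

Definition valid (x : fsum) : Prop :=
  forall p, p \in x -> 0 <= p.1 /\ M p.2.

Definition fsmul (x y : fsum) : fsum :=
  [seq (p.1 * q.1, p.2 * q.2) | p <- x, q <- y].

Inductive bcong : fsum -> fsum -> Prop :=
| bc_refl x : valid x -> bcong x x
| bc_sym x y : bcong x y -> bcong y x
| bc_trans x y z : bcong x y -> bcong y z -> bcong x z
| bc_add x x' y y' : bcong x x' -> bcong y y' -> bcong (x ++ y) (x' ++ y')
| bc_mul x x' y y' : bcong x x' -> bcong y y' ->
    bcong (fsmul x y) (fsmul x' y')
| bc_addC x y : valid x -> valid y -> bcong (x ++ y) (y ++ x)
| bc_idem t s m : 0 <= t -> 0 <= s -> M m ->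
    bcong [:: (t, m); (s, m)] [:: (Num.max t s, m)]
| bc_zero m : M m -> bcong [:: (0, m)] [::]
| bc_scal (lam : k) t c : 0 <= t -> M c -> M (iR lam * c) ->
    bcong [:: (v lam * t, c)] [:: (t, iR lam * c)]
| bc_bend t a (bs : seq R) : 0 <= t -> M a -> (forall b, b \in bs -> M b) ->
    a = \sum_(b <- bs) b ->
    bcong ((t, a) :: [seq (t, b) | b <- bs]) [seq (t, b) | b <- bs].

Definition bend : Type :=
  {P : fsum -> Prop | exists x, valid x /\ P = bcong x}.

Lemma valid_nil : valid [::].
Proof. by move=> p. Qed.

Definition cls (x : fsum) : bend :=
  match pselect (valid x) with
  | left h => exist _ (bcong x) (ex_intro _ x (conj h erefl))
  | right _ => exist _ (bcong [::]) (ex_intro _ [::] (conj valid_nil erefl))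
  end.

Definition rep (X : bend) : fsum := proj1_sig (cid (proj2_sig X)).

(** Hom_T(Bend_v(C), T): morphisms of ordered blue T-algebras into T.
    (The order on Bend_v(C) is its natural order x <= y iff x + y = y.) *)
Definition bend_hom (f : {ptws bend -> K}) : Prop :=
  (forall X, 0 <= f X) /\
  (forall x y, valid x -> valid y ->
     f (cls (x ++ y)) = Num.max (f (cls x)) (f (cls y))) /\
  (forall x y, valid x -> valid y ->
     f (cls (fsmul x y)) = f (cls x) * f (cls y)) /\
  f (cls [::]) = 0 /\
  (forall t, 0 <= t -> f (cls [:: (t, 1)]) = t) /\
  (forall x y, valid x -> valid y -> cls (x ++ y) = cls y ->
     f (cls x) <= f (cls y)).

End Bend.

(** Bend_v(beta) : Bend_v(B) -> Bend_v(R) induced by the identity of R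
    (beta : B -> R the inclusion B^bullet c R). *)
Definition bend_incl (K : realType) (k : fieldType) (v : k -> K)
    (R : comPzRingType) (iR : {rmorphism k -> R}) (M : set R)
    (X : bend v iR M) : bend v iR setT :=
  cls v iR setT (rep X).

Definition Bbullet (k : fieldType) (P R : comPzRingType)
    (iP : {rmorphism k -> P}) (pi : P -> R) n (gens : seq 'rV[int]_n)
    (e : A0 gens -> P) : set R :=
  [set r | exists (c : k) (a : A0 gens), r = pi (iP c * e a)].

(* A multiplicative seminorm [w] on [R] that restricts to [v] on [k] induces the
   morphism [sum_i t_i [r_i] |-> max_i w(r_i) t_i] on [Bend_v(R)]: it respects the
   relations of [Bend_v] exactly because [w] is ultrametric, multiplicative and
   agrees with [v] on [k].  Conversely a morphism [f] gives back the seminorm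
   [r |-> f(r (x) 1)].  Both constructions are built from evaluations, hence are
   continuous for the topologies of pointwise convergence; this proves (1).

   For (2), a morphism [f] on [Bend_v(B)] is determined by [phi = f(- (x) 1)] on
   [B^bullet], a multiplicative function with [phi(a) <= max_j phi(b_j)] whenever
   [a = sum_j b_j] in [R].  Such a [phi] extends to a multiplicative seminorm on
   [R]: by Zorn's lemma there is a minimal ultrametric submultiplicative [s] with
   [s(m y) = phi(m) s(y)] for [m] in [B^bullet]; minimality makes [s] equal to its
   spectral seminorm, so [s] is power-multiplicative, and then equal to
   [g |-> inf_n s(x^n g) / s(x)^n], whence [s(x g) = s(x) s(g)].  As [B^bullet]
   consists of the [pi(c a)], such an [f] is determined by its values at the
   [pi(a)], which form its image in [Trop^KP]. *)

From HB Require Import structures.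
From mathcomp Require Import all_boot all_order all_algebra.
From mathcomp Require Import all_classical all_reals all_analysis.
From mathcomp Require Import ring lra.

Import Order.TTheory GRing.Theory Num.Theory.
Import numFieldTopology.Exports numFieldNormedType.Exports.
Local Open Scope classical_set_scope.
Local Open Scope ring_scope.

Set Implicit Arguments.
Unset Strict Implicit.
Unset Printing Implicit Defensive.

Lemma proj1_sig_inj (T : Type) (P : T -> Prop) (a b : {x | P x}) :
  proj1_sig a = proj1_sig b -> a = b.
Proof. by case: a b => a pa [b pb] /= ab; exact: eq_exist. Qed.

Definition maxs (K : realType) (T : Type) (F : T -> K) (s : seq T) : K :=
  foldr (fun x m => Num.max (F x) m) 0 s.

Section Maxs.
Variables (K : realType) (T : Type).
Implicit Types (F G : T -> K) (s : seq T).

Lemma maxs_ge0 F s : 0 <= maxs F s.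
Proof. by elim: s => [|x s IH] //=; rewrite le_max IH orbT. Qed.

Lemma maxs_cat F s t : maxs F (s ++ t) = Num.max (maxs F s) (maxs F t).
Proof.
elim: s => [|x s IH] /=; first by rewrite max_r // maxs_ge0.
by rewrite IH maxA.
Qed.

Lemma maxs_pMl F s c : 0 <= c -> maxs (fun x => c * F x) s = c * maxs F s.
Proof.
move=> c0; elim: s => [|y s IH] /=; first by rewrite mulr0.
by rewrite IH maxr_pMr.
Qed.

Lemma maxs_pMr F s c : 0 <= c -> maxs (fun x => F x * c) s = maxs F s * c.
Proof.
by move=> c0; rewrite mulrC -maxs_pMl //; congr maxs; apply/funext => x; rewrite mulrC.
Qed.

Lemma eq_maxs F G s : F =1 G -> maxs F s = maxs G s.
Proof. by move=> /funext ->. Qed.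

Lemma maxs_map (U : Type) (f : U -> T) F (s : seq U) :
  maxs F (map f s) = maxs (F \o f) s.
Proof. by elim: s => [|y s IH] //=; rewrite IH. Qed.

Lemma maxs_allpairs (S U : Type) (f : S -> U -> T) F (s : seq S) (t : seq U) :
  maxs F [seq f a b | a <- s, b <- t] = maxs (fun a => maxs (fun b => F (f a b)) t) s.
Proof. by elim: s => [|a s IH] //; rewrite allpairs_cons maxs_cat IH maxs_map. Qed.

End Maxs.

Lemma eq_in_maxs (K : realType) (T : eqType) (F G : T -> K) (s : seq T) :
  {in s, F =1 G} -> maxs F s = maxs G s.
Proof.
elim: s => [|y s IH] //= h; rewrite h ?mem_head // IH // => x hx.
by apply: h; rewrite inE hx orbT.
Qed.

Section RealLemmas.
Variable K : realType.
Implicit Types (E : set K) (a b c z : K).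

Definition nonneg_set E := (exists x, E x) /\ (forall x, E x -> 0 <= x).

Lemma nonneg_set_has_inf E : nonneg_set E -> has_inf E.
Proof. by move=> [[x Ex] h]; split; [exists x|exists 0 => y /h]. Qed.

Lemma inf_le_nonneg E x : nonneg_set E -> E x -> inf E <= x.
Proof. by move=> /nonneg_set_has_inf [_ hl] Ex; apply: ge_inf. Qed.

Lemma le_inf_nonneg E c : nonneg_set E -> (forall x, E x -> c <= x) -> c <= inf E.
Proof. by move=> [ne _] h; apply: lb_le_inf. Qed.

Lemma inf_nonneg_ge0 E : nonneg_set E -> 0 <= inf E.
Proof. by move=> hE; apply: le_inf_nonneg => // x; case: hE => _; apply. Qed.

Lemma inf_adherent_nonneg E eps : nonneg_set E -> 0 < eps ->
  exists2 x, E x & x < inf E + eps.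
Proof. by move=> /nonneg_set_has_inf hE e0; apply: inf_adherent. Qed.

Lemma ler_prod_addgt0 z a b : 0 <= a -> 0 <= b ->
  (forall e, 0 < e -> z <= (a + e) * (b + e)) -> z <= a * b.
Proof.
move=> a0 b0 h; apply/ler_addgt0Pr => d d0.
pose e := Num.min 1 (d / (a + b + 1)).
have hp : 0 < a + b + 1 by lra.
have e0 : 0 < e by rewrite lt_min ltr01 divr_gt0.
have e1 : e <= 1 by rewrite ge_min lexx.
have e2 : e <= d / (a + b + 1) by rewrite ge_min lexx orbT.
apply: le_trans (h e e0) _.
have -> : (a + e) * (b + e) = a * b + e * (a + b + e) by ring.
rewrite lerD2l; apply: le_trans (_ : e * (a + b + 1) <= _).
  by apply: ler_wpM2l; [exact: ltW|rewrite lerD2l].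
by rewrite -ler_pdivlMr.
Qed.

Lemma ler_scale_addgt0 z c a : 0 <= c -> 0 <= a ->
  (forall e, 0 < e -> z <= c * (a + e)) -> z <= c * a.
Proof.
move=> c0 a0 h; rewrite mulrC; apply: ler_prod_addgt0 => // e e0.
apply: le_trans (h e e0) _; rewrite [X in _ <= X]mulrC.
by apply: ler_wpM2r; rewrite ?addr_ge0 ?lerDl // ltW.
Qed.

Lemma ler_wpXn2r n a b : 0 <= a -> a <= b -> a ^+ n <= b ^+ n.
Proof.
move=> a0 ab; elim: n => [|n IH]; rewrite ?expr0 // !exprS.
by apply: ler_pM; rewrite ?exprn_ge0.
Qed.

Lemma Bernoulli_ineq (d : K) n : 0 <= d -> 1 + n%:R * d <= (1 + d) ^+ n.
Proof.
move=> d0; elim: n => [|n IH]; first by rewrite mul0r addr0 expr0.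
rewrite exprS mulrC; apply: le_trans (_ : (1 + n%:R * d) * (1 + d) <= _).
  have -> : (1 + n%:R * d) * (1 + d) = 1 + n.+1%:R * d + n%:R * d * d.
    by rewrite mulrSr; ring.
  have h : 0 <= n%:R * d * d by rewrite !mulr_ge0.
  lra.
rewrite [X in _ <= X]mulrC; apply: ler_wpM2r => //; lra.
Qed.

Lemma maxr_divM (a b c1 c2 : K) : 0 < c1 -> 0 < c2 ->
  Num.max (c2 * a) (c1 * b) / (c1 * c2) = Num.max (a / c1) (b / c2).
Proof.
move=> c10 c20; rewrite maxr_pMl ?invr_ge0 ?mulr_ge0 ?ltW //.
congr Num.max; field; apply/andP; split; rewrite gt_eqF //.
Qed.

End RealLemmas.
(** * Morphisms out of [Bend_v] and seminorms *)

Section Valid.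
Variables (K : realType) (R : comPzRingType) (M : set R).
Implicit Types (x y : fsum K R).

Lemma valid1 (t : K) (r : R) : 0 <= t -> M r -> valid M [:: (t, r)].
Proof. by move=> t0 Mr p; rewrite inE => /eqP ->. Qed.

Lemma valid_catP x y : valid M (x ++ y) <-> valid M x /\ valid M y.
Proof.
split=> [h|[hx hy]].
  by split=> p hp; apply: h; rewrite mem_cat hp ?orbT.
by move=> p; rewrite mem_cat => /orP[/hx|/hy].
Qed.

Lemma valid_behead p x : valid M (p :: x) -> valid M x.
Proof. by move=> vx q hq; apply: vx; rewrite inE hq orbT. Qed.

Lemma valid_fsmul x y : (forall a b, M a -> M b -> M (a * b)) ->
  valid M x -> valid M y -> valid M (fsmul x y).
Proof.
move=> Mmul hx hy p /allpairsP[[a b] [/= ha hb ->]] /=.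
have [a0 Ma] := hx _ ha; have [b0 Mb] := hy _ hb.
by split; [exact: mulr_ge0|exact: Mmul].
Qed.

Lemma valid_sub (M' : set R) x : M `<=` M' -> valid M x -> valid M' x.
Proof. by move=> MM h p /h [? /MM]. Qed.

End Valid.

Section BendClasses.
Variables (K : realType) (k : fieldType) (v : k -> K) (R : comPzRingType)
          (iR : {rmorphism k -> R}) (M : set R).
Implicit Types (x y : fsum K R) (X : bend v iR M).

Lemma eq_cls x y : valid M x -> valid M y ->
  bcong v iR M x y -> cls v iR M x = cls v iR M y.
Proof.
move=> vx vy bxy; apply: proj1_sig_inj; rewrite /cls.
case: pselect => // hx; case: pselect => // hy /=.
apply/funext => z; apply/propext; split => h.
  exact: bc_trans (bc_sym bxy) h.
exact: bc_trans bxy h.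
Qed.

Lemma bcong_cls x y : valid M x -> valid M y ->
  cls v iR M x = cls v iR M y -> bcong v iR M x y.
Proof.
move=> vx vy /(congr1 (@proj1_sig _ _)); rewrite /cls.
case: pselect => // hx; case: pselect => // hy /= ->.
exact: bc_refl.
Qed.

Lemma rep_spec X : valid M (rep X) /\ proj1_sig X = bcong v iR M (rep X).
Proof. by rewrite /rep; case: cid => y [vy Ey]. Qed.

Lemma rep_valid X : valid M (rep X).
Proof. by case: (rep_spec X). Qed.

Lemma cls_rep X : cls v iR M (rep X) = X.
Proof.
apply: proj1_sig_inj; have [vr ->] := rep_spec X; rewrite /cls.
by case: pselect.
Qed.

Lemma bcong_rep_cls x : valid M x -> bcong v iR M (rep (cls v iR M x)) x.
Proof.
move=> vx; apply: bcong_cls => //; first exact: rep_valid.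
by rewrite cls_rep.
Qed.

End BendClasses.


Definition fmax (K : realType) (R : Type) (h : R -> K) (x : seq (K * R)) : K :=
  maxs (fun p => h p.2 * p.1) x.

Section Fmax.
Variables (K : realType) (R : comPzRingType) (h : R -> K).
Implicit Types (x y : fsum K R).

Lemma fmax_cat x y : fmax h (x ++ y) = Num.max (fmax h x) (fmax h y).
Proof. exact: maxs_cat. Qed.

Lemma fmax_ge0 x : 0 <= fmax h x.
Proof. exact: maxs_ge0. Qed.

Lemma fmax1 t r : 0 <= h r * t -> fmax h [:: (t, r)] = h r * t.
Proof. by move=> h0; rewrite /fmax /= max_l. Qed.

Lemma eq_in_fmax (h' : R -> K) x :
  (forall p, p \in x -> h p.2 = h' p.2) -> fmax h x = fmax h' x.
Proof. by move=> hx; apply: eq_in_maxs => p /hx /= ->. Qed.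

Lemma fmax_fsmul (M : set R) x y :
  (forall a, M a -> 0 <= h a) ->
  (forall a b, M a -> M b -> h (a * b) = h a * h b) ->
  valid M x -> valid M y -> fmax h (fsmul x y) = fmax h x * fmax h y.
Proof.
move=> hge hm; elim: x => [|p x IH] vx vy /=; first by rewrite mul0r.
rewrite /fsmul /= -/(fsmul x y) fmax_cat (IH (valid_behead vx) vy).
have [p0 Mp] := vx p (mem_head _ _).
rewrite maxr_pMl ?fmax_ge0 //; congr Num.max.
rewrite /fmax maxs_map -maxs_pMl ?mulr_ge0 ?hge //.
apply: eq_in_maxs => q hq /=; have [q0 Mq] := vy q hq.
by rewrite hm // mulrACA.
Qed.

End Fmax.
Section BendCharacters.
Variables (K : realType) (k : fieldType) (v : k -> K) (R : comPzRingType)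
          (iR : {rmorphism k -> R}).
Hypothesis hv : nonarch_abs v.

Lemma nonarch_abs_ge0 c : 0 <= v c.
Proof. by case: hv. Qed.

Section Invariance.
Variables (M : set R) (h : R -> K).
Hypotheses (h_ge0 : forall a, M a -> 0 <= h a)
  (hM : forall a b, M a -> M b -> h (a * b) = h a * h b)
  (Mmul : forall a b, M a -> M b -> M (a * b))
  (h_scale : forall lam c, M c -> M (iR lam * c) -> h (iR lam * c) = v lam * h c)
  (h_bend : forall a bs, M a -> (forall b, b \in bs -> M b) ->
     a = \sum_(b <- bs) b -> h a <= maxs h bs).

Lemma fmax_bcong x y : bcong v iR M x y ->
  [/\ valid M x, valid M y & fmax h x = fmax h y].
Proof.
elim=> {x y}.
- by [].
- by move=> x y _ [].
- by move=> x y z _ [? ? ->] _ [].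
- move=> x x' y y' _ [vx vx' ex] _ [vy vy' ey].
  by split; rewrite ?valid_catP // !fmax_cat ex ey.
- move=> x x' y y' _ [vx vx' ex] _ [vy vy' ey].
  split; try exact: valid_fsmul.
  by rewrite (fmax_fsmul h_ge0 hM vx vy) (fmax_fsmul h_ge0 hM vx' vy') ex ey.
- by move=> x y vx vy; split; rewrite ?valid_catP // !fmax_cat maxC.
- move=> t s m t0 s0 Mm; split.
  + by move=> p; rewrite !inE => /orP[] /eqP ->.
  + by apply: valid1; rewrite // le_max t0.
  + by rewrite /fmax /= maxA -maxr_pMr ?h_ge0.
- move=> m Mm; split; [exact: valid1 (lexx 0) Mm|exact: valid_nil|].
  by rewrite /fmax /= mulr0 maxxx.
- move=> lam t c t0 Mc Mlc; split.
  + exact: valid1 (mulr_ge0 (nonarch_abs_ge0 _) t0) Mc.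
  + exact: valid1 t0 Mlc.
  + by rewrite /fmax /= h_scale // mulrCA mulrA.
- move=> t a bs t0 Ma Mbs e.
  have vL : valid M [seq (t, b) | b <- bs].
    by move=> p /mapP[b hb ->]; split => //; apply: Mbs.
  split => //; first by move=> p; rewrite inE => /orP[/eqP ->|/vL].
  rewrite {1}/fmax /= -/(fmax h _); apply/max_r.
  rewrite /fmax maxs_map maxs_pMr //.
  by apply: ler_wpM2r => //; apply: h_bend.
Qed.

Lemma fmax_rep_cls x : valid M x -> fmax h (rep (cls v iR M x)) = fmax h x.
Proof. by move=> vx; have [] := fmax_bcong (@bcong_rep_cls _ _ v _ iR _ _ vx). Qed.

End Invariance.

Lemma berk_ultra (w : R -> K) : berk v iR w ->
  forall bs, w (\sum_(b <- bs) b) <= maxs w bs.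
Proof.
move=> [_ [w0 [_ [_ [wD _]]]]]; elim=> [|b bs IH]; first by rewrite big_nil w0.
rewrite big_cons /=; apply: le_trans (wD _ _) _.
by rewrite ge_max le_max lexx /= le_max IH orbT.
Qed.

Lemma berk_fmax_rep_cls (M : set R) (w : R -> K) x :
  (forall a b, M a -> M b -> M (a * b)) -> berk v iR w -> valid M x ->
  fmax w (rep (cls v iR M x)) = fmax w x.
Proof.
move=> Mmul bw; have [w_ge0 [_ [_ [wM [_ wk]]]]] := bw.
apply: fmax_rep_cls => //.
- by move=> lam c _ _; rewrite wM wk.
- by move=> a bs _ _ ->; apply: berk_ultra.
Qed.

Definition bend_hom_of (M : set R) (w : R -> K) : {ptws bend v iR M -> K} :=
  fun X => fmax w (rep X).

Lemma bend_hom_ofE (M : set R) (w : R -> K) (X : bend v iR M) : bend_hom_of w X = fmax w (rep X).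
Proof. by []. Qed.

Lemma bend_hom_of_cls (M : set R) (w : R -> K) x :
  (forall a b, M a -> M b -> M (a * b)) -> berk v iR w -> valid M x ->
  bend_hom_of w (cls v iR M x) = fmax w x.
Proof. exact: berk_fmax_rep_cls. Qed.

Lemma bend_hom_of_hom (M : set R) (w : R -> K) : M 1 ->
  (forall a b, M a -> M b -> M (a * b)) -> berk v iR w ->
  bend_hom (bend_hom_of (M := M) w).
Proof.
move=> M1 Mmul bw; have [w_ge0 [_ [w1 [wM _]]]] := bw.
have hcls x : valid M x -> bend_hom_of (M := M) w (cls v iR M x) = fmax w x.
  exact: bend_hom_of_cls.
split; first by move=> X; apply: fmax_ge0.
split; first by move=> x y vx vy; rewrite !hcls ?fmax_cat ?valid_catP.
split.
  move=> x y vx vy; have vxy := valid_fsmul Mmul vx vy.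
  by rewrite !hcls //; exact: (fmax_fsmul (M := M)).
split; first by rewrite hcls //; exact: valid_nil.
split.
  move=> t t0; rewrite hcls; last exact: valid1.
  by rewrite /fmax /= w1 mul1r max_l.
move=> x y vx vy E; have := congr1 (bend_hom_of (M := M) w) E.
by rewrite !hcls ?valid_catP // fmax_cat => <-; rewrite le_max lexx.
Qed.

Section HomValues.
Variables (M : set R) (M1 : M 1) (f : {ptws bend v iR M -> K}).
Hypothesis hf : bend_hom f.

Definition hom_val (r : R) : K := f (cls v iR M [:: (1, r)]).

Lemma hom_val_ge0 r : 0 <= hom_val r.
Proof. by case: hf => h _; apply: h. Qed.

Lemma hom_cls1 t r : 0 <= t -> M r -> f (cls v iR M [:: (t, r)]) = t * hom_val r.
Proof.
move=> t0 Mr; have [_ [_ [fM [_ [f1 _]]]]] := hf.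
have := fM _ _ (valid1 t0 M1) (valid1 ler01 Mr).
by rewrite /fsmul /= mulr1 mul1r => ->; rewrite f1.
Qed.

Lemma hom_cls_fmax x : valid M x -> f (cls v iR M x) = fmax hom_val x.
Proof.
have [_ [fD [_ [f0 _]]]] := hf.
elim: x => [|[t r] x IH] vx; first by rewrite f0.
have [/= t0 Mr] := vx _ (mem_head _ _).
have v1 := valid1 t0 Mr; have vx' := valid_behead vx.
rewrite -[cls v iR M _]/(cls v iR M ([:: (t, r)] ++ x)) fD // IH //.
by rewrite hom_cls1 // mulrC.
Qed.

Lemma hom_val1 : hom_val 1 = 1.
Proof. by have [_ [_ [_ [_ [f1 _]]]]] := hf; rewrite /hom_val f1. Qed.

Lemma hom_valM a b : M a -> M b -> hom_val (a * b) = hom_val a * hom_val b.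
Proof.
move=> Ma Mb; have [_ [_ [fM _]]] := hf.
by rewrite -(fM _ _ (valid1 ler01 Ma) (valid1 ler01 Mb)) /fsmul /= mulr1.
Qed.

Lemma hom_val_scale lam c : M c -> M (iR lam * c) ->
  hom_val (iR lam * c) = v lam * hom_val c.
Proof.
move=> Mc Mlc; have v0 := nonarch_abs_ge0 lam.
have := eq_cls (valid1 (mulr_ge0 v0 ler01) Mc) (valid1 ler01 Mlc)
  (@bc_scal K k v R iR M lam 1 c ler01 Mc Mlc).
by rewrite /hom_val mulr1 => <-; rewrite hom_cls1.
Qed.

Lemma hom_val_bend a bs : M a -> (forall b, b \in bs -> M b) ->
  a = \sum_(b <- bs) b -> hom_val a <= maxs hom_val bs.
Proof.
move=> Ma Mbs e; have [_ [_ [_ [_ [_ fle]]]]] := hf.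
have vL : valid M [seq ((1:K), b) | b <- bs].
  by move=> p /mapP[b hb ->]; split => //; apply: Mbs.
have va := valid1 (ler01 : 0 <= 1 :> K) Ma.
have vaL : valid M (((1 : K), a) :: [seq (1, b) | b <- bs]).
  by move=> p; rewrite inE => /orP[/eqP -> //|/vL].
have E := eq_cls vaL vL (@bc_bend K k v R iR M 1 a bs ler01 Ma Mbs e).
apply: le_trans (fle _ _ va vL E) _.
rewrite hom_cls_fmax // /fmax maxs_map le_eqVlt; apply/orP; left; apply/eqP.
by apply: eq_maxs => z /=; rewrite mulr1.
Qed.

Lemma hom_val0 : M 0 -> hom_val 0 = 0.
Proof.
move=> M0; have Mnil : forall b, b \in ([::] : seq R) -> M b by [].
apply/le_anti; rewrite hom_val_ge0 andbT.
exact: (hom_val_bend M0 Mnil (esym (big_nil _ _ _ _))).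
Qed.

Lemma hom_val_iR c : M (iR c) -> hom_val (iR c) = v c.
Proof.
by move=> Mc; have := hom_val_scale (lam := c) M1; rewrite !mulr1 hom_val1 mulr1 => /(_ Mc).
Qed.

End HomValues.

Lemma hom_val_berk (f : {ptws bend v iR setT -> K}) : bend_hom f ->
  berk v iR (hom_val f).
Proof.
move=> hf; have M1 : [set: R] 1 by [].
split; first exact: hom_val_ge0.
split; first exact: hom_val0.
split; first exact: hom_val1.
split; first by move=> a b; apply: hom_valM.
split; last by move=> c; exact: hom_val_iR.
move=> a b; have Mab : forall c, c \in [:: a; b] -> [set: R] c by [].
apply: le_trans (hom_val_bend M1 hf I Mab _) _.
  by rewrite big_cons big_cons big_nil addr0.
by rewrite /= (@max_l _ _ (hom_val f b) 0) ?hom_val_ge0.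
Qed.

End BendCharacters.
(** * Extending a seminorm from a multiplicative generating set *)

Section Extension.
Variables (K : realType) (R : comPzRingType) (M : set R) (phi : R -> K).
Hypotheses (M0 : M 0) (M1 : M 1) (Mmul : forall x y, M x -> M y -> M (x * y))
  (phi_ge0 : forall m, M m -> 0 <= phi m) (phi1 : phi 1 = 1)
  (phi_mul : forall x y, M x -> M y -> phi (x * y) = phi x * phi y)
  (phi_bend : forall a bs, M a -> (forall b, b \in bs -> M b) ->
     a = \sum_(b <- bs) b -> phi a <= maxs phi bs)
  (span : forall r, exists L, (forall b, b \in L -> M b) /\ r = \sum_(b <- L) b).

Lemma phi0 : phi 0 = 0.
Proof.
apply/le_anti; rewrite phi_ge0 // andbT.
have h : forall b, b \in ([::] : seq R) -> M b by [].
by have := phi_bend M0 h (esym (big_nil _ _ _ _)).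
Qed.

Lemma M_exp x n : M x -> M (x ^+ n).
Proof. by move=> Mx; elim: n => [|n IH]; rewrite ?expr0 // exprS; apply: Mmul. Qed.

Lemma phi_exp x n : M x -> phi (x ^+ n) = phi x ^+ n.
Proof.
move=> Mx; elim: n => [|n IH]; rewrite ?expr0 // !exprS phi_mul ?IH //.
exact: M_exp.
Qed.

Definition phi_seminorm (s : R -> K) :=
  [/\ forall x, 0 <= s x,
      forall x y, s (x + y) <= Num.max (s x) (s y),
      forall x y, s (x * y) <= s x * s y,
      s 1 = 1 &
      forall m y, M m -> s (m * y) = phi m * s y].

Section PhiSeminorm.
Variable s : R -> K.
Hypothesis hs : phi_seminorm s.

Lemma psn_ge0 x : 0 <= s x. Proof. by case: hs. Qed.
Lemma psn_add x y : s (x + y) <= Num.max (s x) (s y). Proof. by case: hs. Qed.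
Lemma psn_mul x y : s (x * y) <= s x * s y. Proof. by case: hs. Qed.
Lemma psn1 : s 1 = 1. Proof. by case: hs. Qed.
Lemma psn_scale m y : M m -> s (m * y) = phi m * s y. Proof. by case: hs => _ _ _ _; apply. Qed.

Lemma psn0 : s 0 = 0.
Proof. by rewrite -(mul0r 0) psn_scale // phi0 mul0r. Qed.

Lemma psn_exp x n : s (x ^+ n) <= s x ^+ n.
Proof.
elim: n => [|n IH]; first by rewrite !expr0 psn1.
rewrite !exprS; apply: le_trans (psn_mul _ _) _.
by apply: ler_wpM2l; [exact: psn_ge0|].
Qed.

Lemma psn_expM x a b : s (x ^+ (a * b)) <= s (x ^+ a) ^+ b.
Proof. by rewrite exprM; apply: psn_exp. Qed.

Lemma psn_muln x n : s (x *+ n) <= s x.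
Proof.
elim: n => [|n IH]; first by rewrite mulr0n psn0 psn_ge0.
by rewrite mulrS; apply: le_trans (psn_add _ _) _; rewrite ge_max lexx.
Qed.

Lemma psn_sum (I : Type) (r : seq I) (F : I -> R) B : 0 <= B ->
  (forall i, s (F i) <= B) -> s (\sum_(i <- r) F i) <= B.
Proof.
move=> B0 hF; elim: r => [|i r IH]; first by rewrite big_nil psn0.
by rewrite big_cons; apply: le_trans (psn_add _ _) _; rewrite ge_max hF.
Qed.

End PhiSeminorm.

Lemma maxs_phi_scale c L : M c -> (forall b, b \in L -> M b) ->
  maxs phi [seq c * b | b <- L] = phi c * maxs phi L.
Proof.
move=> Mc hL; rewrite maxs_map -maxs_pMl ?phi_ge0 //.
by apply: eq_in_maxs => b hb /=; rewrite phi_mul //; apply: hL.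
Qed.

Definition seed_set (r : R) : set K :=
  [set q | exists m L, [/\ M m, 0 < phi m, (forall b, b \in L -> M b),
     m * r = \sum_(b <- L) b & q = maxs phi L / phi m]].

Lemma seed_set_nonneg r : nonneg_set (seed_set r).
Proof.
split.
  have [L [hL e]] := span r.
  exists (maxs phi L / phi 1); exists 1, L; split => //; first by rewrite phi1.
  by rewrite mul1r.
by move=> q [m [L [Mm pm hL e ->]]]; rewrite divr_ge0 ?maxs_ge0 ?ltW.
Qed.

Definition seed (r : R) : K := inf (seed_set r).

Lemma seed1 : seed 1 = 1.
Proof.
apply/le_anti/andP; split.
  apply: inf_le_nonneg; first exact: seed_set_nonneg.
  exists 1, [:: 1]; split => //; first by rewrite phi1.
  - by move=> b; rewrite inE => /eqP ->.
  - by rewrite big_cons big_nil addr0 mulr1.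
  - by rewrite /= phi1 max_l // divr1.
apply: le_inf_nonneg; first exact: seed_set_nonneg.
move=> q [m [L [Mm pm hL e ->]]].
rewrite ler_pdivlMr // mul1r; apply: phi_bend => //.
by rewrite -e mulr1.
Qed.

Lemma seed_add x y : seed (x + y) <= Num.max (seed x) (seed y).
Proof.
apply/ler_addgt0Pr => e e0.
have [q1 [m1 [L1 [M1' p1 h1 e1 ->]]] lt1] := inf_adherent_nonneg (seed_set_nonneg x) e0.
have [q2 [m2 [L2 [M2' p2 h2 e2 ->]]] lt2] := inf_adherent_nonneg (seed_set_nonneg y) e0.
apply: le_trans (_ : Num.max (maxs phi L1 / phi m1) (maxs phi L2 / phi m2) <= _).
  apply: inf_le_nonneg; first exact: seed_set_nonneg.
  exists (m1 * m2), ([seq m2 * b | b <- L1] ++ [seq m1 * b | b <- L2]); split.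
  - exact: Mmul.
  - by rewrite phi_mul // mulr_gt0.
  - move=> b; rewrite mem_cat => /orP[] /mapP[c hc ->]; apply: Mmul => //.
      exact: h1.
    exact: h2.
  - rewrite big_cat !big_map -!big_distrr /= -e1 -e2 mulrDr; congr (_ + _).
      by rewrite mulrCA mulrA.
    by rewrite mulrA.
  - rewrite maxs_cat !maxs_phi_scale // phi_mul // maxr_divM //.
by rewrite addr_maxl ge_max !le_max (ltW lt1) (ltW lt2) orbT.
Qed.

Lemma seed_ge0 x : 0 <= seed x.
Proof. exact/inf_nonneg_ge0/seed_set_nonneg. Qed.

Lemma seed_mul x y : seed (x * y) <= seed x * seed y.
Proof.
apply: ler_prod_addgt0; try exact: seed_ge0.
move=> e e0.
have [q1 [m1 [L1 [M1' p1 h1 e1 ->]]] lt1] := inf_adherent_nonneg (seed_set_nonneg x) e0.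
have [q2 [m2 [L2 [M2' p2 h2 e2 ->]]] lt2] := inf_adherent_nonneg (seed_set_nonneg y) e0.
apply: le_trans (_ : (maxs phi L1 / phi m1) * (maxs phi L2 / phi m2) <= _); last first.
  apply: ler_pM; [exact: divr_ge0 (maxs_ge0 _ _) (ltW p1)|
    exact: divr_ge0 (maxs_ge0 _ _) (ltW p2)|exact: ltW|exact: ltW].
apply: inf_le_nonneg; first exact: seed_set_nonneg.
exists (m1 * m2), [seq a * b | a <- L1, b <- L2]; split.
- exact: Mmul.
- by rewrite phi_mul // mulr_gt0.
- by move=> b /allpairsP[[a c] [/= ha hc ->]]; apply: Mmul; [apply: h1|apply: h2].
- rewrite big_allpairs_dep /=.
  have -> : m1 * m2 * (x * y) = (m1 * x) * (m2 * y).
    by rewrite -!mulrA; congr (_ * _); rewrite mulrCA.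
  by rewrite e1 e2 big_distrlr.
- rewrite maxs_allpairs.
  have -> : maxs (fun a => maxs (fun b => phi (a * b)) L2) L1 =
            maxs (fun a => phi a * maxs phi L2) L1.
    apply: eq_in_maxs => a ha; rewrite -maxs_pMl; last by apply/phi_ge0/h1.
    by apply: eq_in_maxs => b hb; rewrite phi_mul //; [apply: h1|apply: h2].
  rewrite maxs_pMr ?maxs_ge0 // phi_mul // invfM; ring.
Qed.

Lemma seed_scale m y : M m -> seed (m * y) = phi m * seed y.
Proof.
move=> Mm.
have le1 : seed (m * y) <= phi m * seed y.
  apply: ler_scale_addgt0; rewrite ?phi_ge0 ?seed_ge0 // => e e0.
  have [q1 [m1 [L1 [M1' p1 h1 e1 ->]]] lt1] := inf_adherent_nonneg (seed_set_nonneg y) e0.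
  apply: le_trans (_ : phi m * (maxs phi L1 / phi m1) <= _); last first.
    by apply: ler_wpM2l; rewrite ?phi_ge0 ?ltW.
  apply: inf_le_nonneg; first exact: seed_set_nonneg.
  exists m1, [seq m * b | b <- L1]; split => //.
  - by move=> b /mapP[c hc ->]; apply: Mmul => //; apply: h1.
  - by rewrite big_map -big_distrr /= -e1 mulrCA.
  - by rewrite maxs_phi_scale // mulrA.
have [p0|p0] := eqVneq (phi m) 0.
  rewrite p0 mul0r; apply/le_anti; rewrite seed_ge0 andbT.
  by move: le1; rewrite p0 mul0r.
have pm : 0 < phi m by rewrite lt_def p0 phi_ge0.
apply/le_anti; rewrite le1 /=.
apply: le_inf_nonneg; first exact: seed_set_nonneg.
move=> q [m1 [L1 [M1' p1 h1 e1 ->]]].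
rewrite mulrC -ler_pdivlMr //.
apply: inf_le_nonneg; first exact: seed_set_nonneg.
exists (m1 * m), L1; split => //.
- exact: Mmul.
- by rewrite phi_mul // mulr_gt0.
- by rewrite -mulrA.
- by rewrite phi_mul // invfM mulrA.
Qed.

Lemma seed_psn : phi_seminorm seed.
Proof. by split; [exact: seed_ge0|exact: seed_add|exact: seed_mul|exact: seed1|exact: seed_scale]. Qed.

Definition chain_inf (A : set (R -> K)) (x : R) : K := inf [set s x | s in A].

Section Chain.
Variable A : set (R -> K).
Hypotheses (An : exists s, A s) (AS : forall s, A s -> phi_seminorm s)
  (Atot : forall s t, A s -> A t -> (forall x, s x <= t x) \/ (forall x, t x <= s x)).

Lemma chain_nonneg x : nonneg_set [set s x | s in A].
Proof.
split; first by case: An => s As; exists (s x), s.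
by move=> q [s As <-]; apply: psn_ge0; apply: AS.
Qed.

Lemma chain_common s1 s2 : A s1 -> A s2 ->
  exists2 s3, A s3 & forall x, s3 x <= s1 x /\ s3 x <= s2 x.
Proof.
move=> A1 A2; case: (Atot A1 A2) => h.
  by exists s1 => // x; rewrite lexx h.
by exists s2 => // x; rewrite lexx h.
Qed.

Lemma chain_inf_le s x : A s -> chain_inf A x <= s x.
Proof. by move=> As; apply: inf_le_nonneg; [exact: chain_nonneg|exists s]. Qed.

Lemma chain_inf_ge0 x : 0 <= chain_inf A x.
Proof. exact/inf_nonneg_ge0/chain_nonneg. Qed.

Lemma chain_inf_adherent x e : 0 < e -> exists2 s, A s & s x < chain_inf A x + e.
Proof.
by move=> e0; have [q [s As <-] lt] := inf_adherent_nonneg (chain_nonneg x) e0; exists s.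
Qed.

Lemma chain_inf_psn : phi_seminorm (chain_inf A).
Proof.
split.
- exact: chain_inf_ge0.
- move=> x y; apply/ler_addgt0Pr => e e0.
  have [s1 A1 l1] := chain_inf_adherent x e0; have [s2 A2 l2] := chain_inf_adherent y e0.
  have [s3 A3 h3] := chain_common A1 A2.
  apply: le_trans (chain_inf_le _ A3) _.
  apply: le_trans (psn_add (AS A3) _ _) _.
  rewrite addr_maxl ge_max !le_max.
  have [h3x _] := h3 x; have [_ h3y] := h3 y.
  by rewrite (le_trans h3x (ltW l1)) (le_trans h3y (ltW l2)) orbT.
- move=> x y; apply: ler_prod_addgt0; try exact: chain_inf_ge0.
  move=> e e0.
  have [s1 A1 l1] := chain_inf_adherent x e0; have [s2 A2 l2] := chain_inf_adherent y e0.
  have [s3 A3 h3] := chain_common A1 A2.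
  apply: le_trans (chain_inf_le _ A3) _.
  apply: le_trans (psn_mul (AS A3) _ _) _.
  have [h3x _] := h3 x; have [_ h3y] := h3 y.
  by apply: ler_pM; rewrite ?(psn_ge0 (AS A3)) ?(le_trans h3x (ltW l1)) ?(le_trans h3y (ltW l2)).
- apply/le_anti/andP; split.
    by case: An => s As; apply: le_trans (chain_inf_le _ As) _; rewrite (psn1 (AS As)).
  by apply: le_inf_nonneg; [exact: chain_nonneg|move=> q [s As <-]; rewrite (psn1 (AS As))].
- move=> m y Mm; apply/le_anti/andP; split.
    apply: ler_scale_addgt0; rewrite ?phi_ge0 ?chain_inf_ge0 // => e e0.
    have [s1 A1 l1] := chain_inf_adherent y e0.
    apply: le_trans (chain_inf_le _ A1) _; rewrite (psn_scale (AS A1)) //.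
    by apply: ler_wpM2l; rewrite ?phi_ge0 ?ltW.
  apply: le_inf_nonneg; first exact: chain_nonneg.
  move=> q [s As <-]; rewrite (psn_scale (AS As)) //.
  by apply: ler_wpM2l; rewrite ?phi_ge0 ?chain_inf_le.
Qed.
End Chain.

Lemma exists_minimal_psn : exists s, phi_seminorm s /\
  forall t, phi_seminorm t -> (forall x, t x <= s x) -> t = s.
Proof.
pose T := {s : R -> K | phi_seminorm s}.
pose ge_pw := fun a b : T => `[< forall x, proj1_sig b x <= proj1_sig a x >].
have := @Zorn T ge_pw.
case.
- by move=> t; apply/asboolP => x.
- move=> r s t /asboolP h1 /asboolP h2; apply/asboolP => x.
  exact: le_trans (h2 x) (h1 x).
- move=> s t /asboolP h1 /asboolP h2; apply: proj1_sig_inj; apply/funext => x.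
  by apply/le_anti; rewrite h1 h2.
- move=> A Atot.
  have [An|A0] := pselect (exists t, A t); last first.
    exists (exist _ seed seed_psn) => s As; exfalso; apply: A0; by exists s.
  pose A' := [set proj1_sig t | t in A].
  have An' : exists s, A' s by case: An => t At; exists (proj1_sig t), t.
  have AS' : forall s, A' s -> phi_seminorm s by move=> s [t At <-]; exact: (proj2_sig t).
  have Atot' : forall s t, A' s -> A' t ->
      (forall x, s x <= t x) \/ (forall x, t x <= s x).
    move=> s t [s' As' <-] [t' At' <-].
    by case: (Atot _ _ As' At') => /asboolP h; [right|left].
  exists (exist _ (chain_inf A') (chain_inf_psn An' AS' Atot')) => s As.
  by apply/asboolP => x /=; apply: (@chain_inf_le A' An' AS' (proj1_sig s) x); exists s.
- move=> t ht; exists (proj1_sig t); split; first exact: (proj2_sig t).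
  move=> u uS ule.
  have := ht (exist _ u uS); rewrite /ge_pw /=.
  by move=> /(_ (asboolT ule)) <-.
Qed.

Section Spectral.
Variable s : R -> K.
Hypothesis hs : phi_seminorm s.

(* The spectral seminorm [x |-> lim_n s(x^n)^(1/n)], written without roots. *)
Definition spec_set (x : R) : set K :=
  [set t | 0 <= t /\ exists n, s (x ^+ n.+1) <= t ^+ n.+1].
Definition spec (x : R) : K := inf (spec_set x).

Lemma spec_set_nonneg x : nonneg_set (spec_set x).
Proof.
split; last by move=> t [].
exists (s x); split; first exact: psn_ge0.
by exists 0%N; rewrite !expr1.
Qed.

Lemma spec_ge0 x : 0 <= spec x.
Proof. exact/inf_nonneg_ge0/spec_set_nonneg. Qed.

Lemma spec_le x t : spec_set x t -> spec x <= t.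
Proof. by move=> h; apply: inf_le_nonneg => //; exact: spec_set_nonneg. Qed.

Lemma spec_le_self x : spec x <= s x.
Proof.
apply: spec_le; split; first exact: psn_ge0.
by exists 0%N; rewrite !expr1.
Qed.

Lemma spec_set_gt x t : spec x < t -> spec_set x t.
Proof.
move=> lt; have e0 : 0 < t - spec x by rewrite subr_gt0.
have [t' [t0 [n hn]] lt'] := inf_adherent_nonneg (spec_set_nonneg x) e0.
have tt : t' <= t by move: lt'; rewrite -/(spec x) addrC subrK => /ltW.
split; first exact: le_trans tt.
by exists n; apply: le_trans hn (ler_wpXn2r _ t0 tt).
Qed.

Lemma psn_exp_scale m y n : M m -> s ((m * y) ^+ n) = phi m ^+ n * s (y ^+ n).
Proof.
by move=> Mm; rewrite exprMn (psn_scale hs) ?phi_exp //; exact: M_exp.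
Qed.

Lemma spec1 : spec 1 = 1.
Proof.
apply/le_anti/andP; split.
  apply: spec_le; split => //; exists 0%N; by rewrite expr1n (psn1 hs) expr1n.
apply: le_inf_nonneg; first exact: spec_set_nonneg.
move=> t [t0 [n hn]]; rewrite expr1n (psn1 hs) in hn.
rewrite leNgt; apply/negP => t1.
by move: hn; rewrite leNgt exprn_ilt1.
Qed.

Lemma spec_scale m y : M m -> spec (m * y) = phi m * spec y.
Proof.
move=> Mm.
have le1 : spec (m * y) <= phi m * spec y.
  apply: ler_scale_addgt0; rewrite ?phi_ge0 ?spec_ge0 // => e e0.
  have [t [t0 [n hn]] lt] := inf_adherent_nonneg (spec_set_nonneg y) e0.
  apply: le_trans (_ : phi m * t <= _); last by rewrite ler_wpM2l ?phi_ge0 ?ltW.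
  apply: spec_le; split; first by rewrite mulr_ge0 ?phi_ge0.
  exists n; rewrite psn_exp_scale // exprMn ler_wpM2l //.
  by rewrite exprn_ge0 ?phi_ge0.
have [p0|p0] := eqVneq (phi m) 0.
  rewrite p0 mul0r; apply/le_anti; rewrite spec_ge0 andbT.
  by move: le1; rewrite p0 mul0r.
have pm : 0 < phi m by rewrite lt_def p0 phi_ge0.
apply/le_anti; rewrite le1 /=.
apply: le_inf_nonneg; first exact: spec_set_nonneg.
move=> t [t0 [n hn]].
rewrite mulrC -ler_pdivlMr //; apply: spec_le; split.
  by rewrite divr_ge0 // ltW.
exists n; rewrite expr_div_n ler_pdivlMr ?exprn_gt0 // mulrC -psn_exp_scale //.
Qed.

Lemma spec_mul x y : spec (x * y) <= spec x * spec y.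
Proof.
apply: ler_prod_addgt0; rewrite ?spec_ge0 // => e e0.
have [t1 [t10 [n1 h1]] lt1] := inf_adherent_nonneg (spec_set_nonneg x) e0.
have [t2 [t20 [n2 h2]] lt2] := inf_adherent_nonneg (spec_set_nonneg y) e0.
apply: le_trans (_ : t1 * t2 <= _); last by apply: ler_pM => //; apply: ltW.
apply: spec_le; split; first by rewrite mulr_ge0.
pose N := (n1.+1 * n2.+1)%N.
have hx : s (x ^+ N) <= t1 ^+ N.
  apply: le_trans (psn_expM hs _ _ _) _.
  rewrite /N exprM; apply: ler_wpXn2r => //; exact: psn_ge0.
have hy : s (y ^+ N) <= t2 ^+ N.
  rewrite /N mulnC; apply: le_trans (psn_expM hs _ _ _) _.
  rewrite exprM; apply: ler_wpXn2r => //; exact: psn_ge0.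
have NS : N = N.-1.+1 by rewrite prednK // muln_gt0.
exists N.-1; rewrite -NS exprMn.
apply: le_trans (psn_mul hs _ _) _.
by rewrite exprMn; apply: ler_pM => //; exact: psn_ge0.
Qed.

Lemma psn_exp_bound z g N0 : 0 < g -> (0 < N0)%N -> s (z ^+ N0) <= g ^+ N0 ->
  exists2 C, 0 <= C & forall i, s (z ^+ i) <= C * g ^+ i.
Proof.
move=> g0 N00 hN.
pose C := \sum_(r < N0) s (z ^+ r) / g ^+ r.
have C0 : 0 <= C by apply: sumr_ge0 => r _; rewrite divr_ge0 ?psn_ge0 ?exprn_ge0 ?ltW.
exists C => // i; elim/ltn_ind: i => i IH.
have [iN|iN] := ltnP i N0.
  have -> : s (z ^+ i) = (s (z ^+ i) / g ^+ i) * g ^+ i.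
    by rewrite divfK // expf_neq0 // gt_eqF.
  apply: ler_wpM2r; first by rewrite exprn_ge0 ?ltW.
  rewrite /C (bigD1 (Ordinal iN)) //= lerDl.
  by apply: sumr_ge0 => r _; rewrite divr_ge0 ?psn_ge0 ?exprn_ge0 ?ltW.
have -> : i = (N0 + (i - N0))%N by rewrite subnKC.
rewrite exprD; apply: le_trans (psn_mul hs _ _) _.
have := IH (i - N0)%N; rewrite ltn_subrL N00 /= => /(_ (leq_trans N00 iN)) h.
rewrite exprD mulrCA; apply: ler_pM => //; rewrite ?psn_ge0 //.
Qed.

Lemma psn_binom_bound x y N B1 B2 g : 0 <= B1 -> 0 <= B2 -> 0 <= g ->
  (forall i, s (x ^+ i) <= B1 * g ^+ i) -> (forall i, s (y ^+ i) <= B2 * g ^+ i) ->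
  s ((x + y) ^+ N) <= B1 * B2 * g ^+ N.
Proof.
move=> B10 B20 g0 hx hy; rewrite exprDn; apply: psn_sum => //.
  by rewrite !mulr_ge0 // exprn_ge0.
move=> i; apply: le_trans (psn_muln hs _ _) _.
apply: le_trans (psn_mul hs _ _) _.
apply: le_trans (_ : (B1 * g ^+ (N - i)) * (B2 * g ^+ i) <= _).
  by apply: ler_pM; rewrite ?psn_ge0.
rewrite mulrACA -exprD subnK //; last by rewrite -ltnS ltn_ord.
Qed.

Lemma spec_le_bound z g C : 0 < g -> 0 <= C ->
  (forall i, s (z ^+ i) <= C * g ^+ i) -> spec z <= g.
Proof.
move=> g0 C0 hz; apply/ler_addgt0Pr => d d0.
pose dd := d / g; have dd0 : 0 < dd by rewrite divr_gt0.
pose n := Num.Def.archi_bound (C / dd).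
have hn : C / dd < n%:R by apply: archi_boundP; rewrite divr_ge0 // ltW.
have hC : C <= (1 + dd) ^+ n.+1.
  apply: le_trans (Bernoulli_ineq n.+1 (ltW dd0)).
  move: hn; rewrite ltr_pdivrMr // => /ltW h.
  apply: le_trans h _; rewrite -natr1 mulrDl mul1r.
  have := ltW dd0; set a := n%:R * dd; lra.
apply: spec_le; split; first by rewrite addr_ge0 ?ltW.
exists n; apply: le_trans (hz _) _.
have -> : g + d = g * (1 + dd) by rewrite /dd mulrDr mulr1 mulrCA divff ?mulr1 // gt_eqF.
by rewrite exprMn mulrC; apply: ler_wpM2l => //; rewrite exprn_ge0 // ltW.
Qed.

Lemma spec_gt_bound z g : spec z < g ->
  exists2 C, 0 <= C & forall i, s (z ^+ i) <= C * g ^+ i.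
Proof.
move=> lt; have [_ [n hn]] := spec_set_gt lt.
exact: psn_exp_bound (le_lt_trans (spec_ge0 z) lt) (ltn0Sn n) hn.
Qed.

Lemma spec_add x y : spec (x + y) <= Num.max (spec x) (spec y).
Proof.
apply/ler_addgt0Pr => e e0; set g := Num.max _ _ + e.
have gx : spec x < g by rewrite ltr_pwDr // le_max lexx.
have gy : spec y < g by rewrite ltr_pwDr // le_max lexx orbT.
have g0 : 0 < g := le_lt_trans (spec_ge0 x) gx.
have [C1 C10 hC1] := spec_gt_bound gx; have [C2 C20 hC2] := spec_gt_bound gy.
apply: (spec_le_bound g0 (mulr_ge0 C10 C20)) => N.
by apply: psn_binom_bound => //; exact: ltW.
Qed.

Lemma spec_psn : phi_seminorm spec.
Proof. by split; [exact: spec_ge0|exact: spec_add|exact: spec_mul|exact: spec1|exact: spec_scale]. Qed.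
End Spectral.

Section Minimal.
Variable s : R -> K.
Hypotheses (hs : phi_seminorm s) (hmin : forall t, phi_seminorm t -> (forall x, t x <= s x) -> t = s).

Lemma min_spec : spec s = s.
Proof. apply: hmin; [exact: spec_psn|exact: spec_le_self]. Qed.

Lemma min_psn_sqr x : s (x ^+ 2) = s x ^+ 2.
Proof.
apply/le_anti; rewrite psn_exp //=.
set t := Num.sqrt (s (x ^+ 2)).
have t0 : 0 <= t by rewrite sqrtr_ge0.
have ht : t ^+ 2 = s (x ^+ 2) by rewrite sqr_sqrtr // psn_ge0.
have : spec s x <= t.
  by apply: spec_le => //; split => //; exists 1%N; rewrite ht.
rewrite min_spec => h; rewrite -ht; apply: ler_wpXn2r => //; exact: psn_ge0.
Qed.

Lemma min_psn_exp2n x k : s (x ^+ (2 ^ k)) = s x ^+ (2 ^ k).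
Proof.
elim: k => [|k IH]; first by rewrite expn0 !expr1.
by rewrite expnSr !exprM min_psn_sqr IH.
Qed.

Lemma min_psn_exp x n : s (x ^+ n) = s x ^+ n.
Proof.
apply/le_anti; rewrite psn_exp //=.
have [r0|r0] := eqVneq (s x) 0.
  case: n => [|n]; first by rewrite !expr0 (psn1 hs).
  by rewrite r0 expr0n /= psn_ge0.
have rp : 0 < s x by rewrite lt_def r0 psn_ge0.
have hn : (n <= 2 ^ n)%N by apply: ltnW; apply: ltn_expl.
have := min_psn_exp2n x n; rewrite -(subnK hn) !exprD => e.
have : s x ^+ (2 ^ n - n) * s x ^+ n <= s (x ^+ n) * s x ^+ (2 ^ n - n).
  rewrite -e; apply: le_trans (psn_mul hs _ _) _; rewrite mulrC.
  by apply: ler_wpM2l; [exact: psn_ge0|exact: psn_exp].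
by rewrite mulrC ler_pM2r // exprn_gt0.
Qed.

Section Shift.
Variable x : R.
Hypothesis rp : 0 < s x.
Let r := s x.

(* Another [phi_seminorm] below [s]; for minimal [s] it equals [s], which gives
   [s x * s g <= s (x * g)]. *)
Definition shift_set (g : R) : set K := [set q | exists n, q = s (x ^+ n * g) / r ^+ n].
Definition shift (g : R) : K := inf (shift_set g).

Lemma shift_set_nonneg g : nonneg_set (shift_set g).
Proof.
split; first by exists (s (x ^+ 0 * g) / r ^+ 0), 0%N.
by move=> q [n ->]; rewrite divr_ge0 ?psn_ge0 ?exprn_ge0 ?ltW.
Qed.

Lemma shift_le g n : shift g <= s (x ^+ n * g) / r ^+ n.
Proof. by apply: inf_le_nonneg; [exact: shift_set_nonneg|exists n]. Qed.

Lemma shift_ge0 g : 0 <= shift g.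
Proof. exact/inf_nonneg_ge0/shift_set_nonneg. Qed.

Lemma shift_adherent g e : 0 < e -> exists n, s (x ^+ n * g) / r ^+ n < shift g + e.
Proof. by move=> e0; have [q [n ->] lt] := inf_adherent_nonneg (shift_set_nonneg g) e0; exists n. Qed.

Lemma shift_term_step g n : s (x ^+ n.+1 * g) / r ^+ n.+1 <= s (x ^+ n * g) / r ^+ n.
Proof.
rewrite exprS -mulrA ler_pdivrMr ?exprn_gt0 //.
apply: le_trans (psn_mul hs _ _) _.
rewrite exprS mulrCA divfK ?expf_neq0 ?gt_eqF //.
Qed.

Lemma shift_term_mono g n m : (n <= m)%N -> s (x ^+ m * g) / r ^+ m <= s (x ^+ n * g) / r ^+ n.
Proof.
move=> /subnK <-; elim: (m - n)%N => [|d IH]; first by rewrite add0n.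
by rewrite addSn; apply: le_trans (shift_term_step _ _) IH.
Qed.

Lemma shift_psn : phi_seminorm shift.
Proof.
split.
- exact: shift_ge0.
- move=> g h; apply/ler_addgt0Pr => e e0.
  have [n1 l1] := shift_adherent g e0; have [n2 l2] := shift_adherent h e0.
  apply: le_trans (shift_le _ (n1 + n2)) _.
  rewrite mulrDr.
  apply: le_trans (ler_wpM2r _ (psn_add hs _ _)) _.
    by rewrite invr_ge0 exprn_ge0 // ltW.
  rewrite maxr_pMl ?invr_ge0 ?exprn_ge0 ?ltW // addr_maxl gt_max !lt_max.
  have m1 := shift_term_mono g (leq_addr n2 n1); have m2 := shift_term_mono h (leq_addl n1 n2).
  by rewrite (le_lt_trans m1 l1) (le_lt_trans m2 l2) orbT.
- move=> g h; apply: ler_prod_addgt0; rewrite ?shift_ge0 // => e e0.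
  have [n1 l1] := shift_adherent g e0; have [n2 l2] := shift_adherent h e0.
  apply: le_trans (shift_le _ (n1 + n2)) _.
  apply: le_trans (_ : (s (x ^+ n1 * g) / r ^+ n1) * (s (x ^+ n2 * h) / r ^+ n2) <= _);
    last by apply: ler_pM; rewrite ?divr_ge0 ?psn_ge0 ?exprn_ge0 ?ltW.
  rewrite !exprD invfM mulrACA [X in _ <= X]mulrACA.
  apply: ler_wpM2r; last exact: psn_mul.
  by rewrite mulr_ge0 // invr_ge0 exprn_ge0 // ltW.
- apply/le_anti/andP; split.
    by apply: le_trans (shift_le _ 0) _; rewrite expr0 mul1r (psn1 hs) expr0 divr1.
  apply: le_inf_nonneg; first exact: shift_set_nonneg.
  move=> q [n ->]; rewrite mulr1 min_psn_exp divff // expf_neq0 // gt_eqF //.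
- move=> m y Mm; apply/le_anti/andP; split.
    apply: ler_scale_addgt0; rewrite ?phi_ge0 ?shift_ge0 // => e e0.
    have [n l] := shift_adherent y e0.
    apply: le_trans (shift_le _ n) _.
    rewrite mulrCA (psn_scale hs) // -mulrA; apply: ler_wpM2l; rewrite ?phi_ge0 ?ltW //.
  apply: le_inf_nonneg; first exact: shift_set_nonneg.
  move=> q [n ->]; rewrite mulrCA (psn_scale hs) // -mulrA.
  by apply: ler_wpM2l; rewrite ?phi_ge0 ?shift_le.
Qed.

Lemma shift_le_self g : shift g <= s g.
Proof. by apply: le_trans (shift_le _ 0) _; rewrite expr0 mul1r expr0 divr1. Qed.

Lemma min_psn_mul_ge g : s x * s g <= s (x * g).
Proof.
have E := hmin shift_psn shift_le_self.
rewrite -E; apply: le_inf_nonneg; first exact: shift_set_nonneg.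
move=> q [n ->].
have := shift_le g n.+1; rewrite E.
rewrite exprSr -mulrA ler_pdivlMr ?exprn_gt0 // exprSr mulrA.
move=> h; rewrite ler_pdivlMr ?exprn_gt0 //; apply: le_trans h.
rewrite le_eqVlt; apply/orP; left; apply/eqP; rewrite /r; ring.
Qed.

End Shift.

Lemma min_psnM x y : s (x * y) = s x * s y.
Proof.
apply/le_anti; rewrite psn_mul //=.
have [r0|r0] := eqVneq (s x) 0.
  by rewrite r0 mul0r psn_ge0.
by apply: min_psn_mul_ge; rewrite lt_def r0 psn_ge0.
Qed.

End Minimal.

Theorem mult_seminorm_extension : exists w : R -> K,
  [/\ forall x, 0 <= w x, w 1 = 1, forall x y, w (x * y) = w x * w y,
      forall x y, w (x + y) <= Num.max (w x) (w y) &
      forall m, M m -> w m = phi m].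
Proof.
have [s [hs hmin]] := exists_minimal_psn.
exists s; split.
- exact: psn_ge0.
- exact: psn1.
- exact: min_psnM.
- exact: psn_add.
- by move=> m Mm; have := psn_scale hs 1 Mm; rewrite mulr1 (psn1 hs) mulr1.
Qed.

End Extension.
(** * Topology of pointwise convergence *)

Lemma ptws_eval_continuous (I : Type) (K : realType) (i : I) :
  continuous (fun g : {ptws I -> K} => g i).
Proof.
(* [proj_continuous] wants an [eqType] of indices; classically every type is one. *)
pose J : eqType := HB.pack_for eqType I (gen_eqMixin I).
exact: (@proj_continuous J (fun _ => K) i).
Qed.

Lemma continuous_into_ptws (X : topologicalType) (I : Type) (K : realType)
    (h : X -> {ptws I -> K}) :
  (forall i, continuous (fun x => h x i)) -> continuous h.
Proof.
move=> hc x; apply/cvg_sup => i A /=.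
rewrite nbhsE => -[B [[C oC <-] Cx] BA].
have : nbhs x ((fun y => h y i) @^-1` C) by apply/hc/open_nbhs_nbhs.
by rewrite nbhsE => -[B0 oB0 sub]; exists B0 => // y /sub Cy; exact: BA.
Qed.

Lemma continuous_fmax (X : topologicalType) (K : realType) (R : Type)
    (h : X -> R -> K) (s : seq (K * R)) :
  (forall r, continuous (h ^~ r)) -> continuous (fun y => fmax (h y) s).
Proof.
move=> hc; elim: s => [|[t r] s IH] y /=; first exact: cvg_cst.
apply: (@continuous_max _ _ (fun y => h y r * t) (fun y => fmax (h y) s)).
  exact: cvgMr_tmp (hc r y).
exact: IH.
Qed.

Section BerkovichBend.
Variables (K : realType) (k : fieldType) (v : k -> K) (R : comPzRingType)
          (iR : {rmorphism k -> R}).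
Hypothesis hv : nonarch_abs v.
Local Notation bend_hom_of M := (@bend_hom_of K k v R iR M).

Lemma bend_hom_of_continuous (M : set R) :
  continuous (fun w : {ptws R -> K} => bend_hom_of M w).
Proof.
by apply: continuous_into_ptws => X; apply: continuous_fmax => r; exact: ptws_eval_continuous.
Qed.

Lemma berk_homeo_bend : homeo_on [set w : {ptws R -> K} | berk v iR w]
  [set f : {ptws bend v iR setT -> K} | bend_hom f] (bend_hom_of setT).
Proof.
have M1 : [set: R] 1 by [].
have Mmul : forall a b : R, setT a -> setT b -> setT (a * b) by [].
split; first by move=> w; exact: bend_hom_of_hom.
exists (fun f => (hom_val f : {ptws R -> K})); split.
- by move=> f; exact: hom_val_berk.
- move=> w bw; apply/funext => r; rewrite /hom_val bend_hom_of_cls //.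
    by case: bw => w_ge0 _; rewrite fmax1 ?mulr1 // mulr1 w_ge0.
  exact: valid1.
- move=> f hf; apply/funext => X.
  by rewrite bend_hom_ofE -(hom_cls_fmax M1 hf (rep_valid (X := X))) cls_rep.
- exact/continuous_subspaceT/bend_hom_of_continuous.
- apply/continuous_subspaceT/continuous_into_ptws => r; exact: ptws_eval_continuous.
Qed.

Definition bend_precomp (M : set R) (f : {ptws bend v iR setT -> K}) :
  {ptws bend v iR M -> K} := fun X => f (bend_incl X).

Lemma bend_precomp_hom (M : set R) (f : {ptws bend v iR setT -> K}) : M 1 ->
  (forall a b, M a -> M b -> M (a * b)) -> bend_hom f -> bend_hom (bend_precomp (M := M) f).
Proof.
move=> M1 Mmul hf.
have -> : bend_precomp (M := M) f = bend_hom_of M (hom_val f).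
  apply/funext => X; rewrite /bend_precomp /bend_incl.
  exact: (hom_cls_fmax (I : setT 1) hf (valid_sub (fun _ _ => I) (rep_valid (X := X)))).
exact: bend_hom_of_hom (hom_val_berk hv hf).
Qed.

Lemma bend_precomp_continuous (M : set R) : continuous (bend_precomp (M := M)).
Proof. by apply: continuous_into_ptws => X; exact: ptws_eval_continuous. Qed.

End BerkovichBend.
Arguments bend_precomp {K k v R iR} M f.

(** * The toric setting *)

Lemma inA_add n (gens : seq 'rV[int]_n) a b :
  inA gens a -> inA gens b -> inA gens (a + b).
Proof.
move=> ha; elim=> [|b' g _ IH hg]; first by rewrite addr0.
by rewrite addrA; apply: inA_S.
Qed.

Lemma inA0_mul n (gens : seq 'rV[int]_n) x y :
  inA0 gens x -> inA0 gens y -> inA0 gens (mulA0 x y).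
Proof. by case: x y => [a|] [b|] //=; exact: inA_add. Qed.

Section Toric.
Variables (K : realType) (k : fieldType) (v : k -> K) (n : nat)
  (gens : seq 'rV[int]_n) (P : comPzRingType) (iP : {rmorphism k -> P})
  (e : A0 gens -> P) (R : comPzRingType) (iR : {rmorphism k -> R})
  (pi : {rmorphism P -> R}).
Hypotheses (hv : nonarch_abs v) (he : is_monoid_algebra iP e)
  (hpik : forall c, pi (iP c) = iR c) (hpis : forall r : R, exists p : P, pi p = r).

Local Notation MB := (Bbullet iP pi e).
Local Notation trop := (tropKP (K := K) pi e).
Local Notation bend_hom_of M := (@bend_hom_of K k v R iR M).

Definition A0_one : A0 gens := exist _ (oneA0 n) (inA_0 gens).

Lemma e_one : e A0_one = 1.
Proof. by case: he => _ he1 _ _ _; exact: he1. Qed.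

Lemma Bbullet_mul x y : MB x -> MB y -> MB (x * y).
Proof.
case: he => _ _ heM _ _ [c [a ->]] [c' [a' ->]].
pose z : A0 gens := exist _ _ (inA0_mul (proj2_sig a) (proj2_sig a')).
exists (c * c'), z; rewrite (heM a a' z) // -rmorphM.
by apply: congr1; rewrite rmorphM mulrACA.
Qed.

Lemma Bbullet1 : MB 1.
Proof. by exists 1, A0_one; rewrite rmorph1 e_one mulr1 rmorph1. Qed.

Lemma Bbullet0 : MB 0.
Proof. by exists 0, A0_one; rewrite rmorph0 mul0r rmorph0. Qed.

Lemma Bbullet_e a : MB (pi (e a)).
Proof. by exists 1, a; rewrite rmorph1 mul1r. Qed.

Lemma Bbullet_sum r : exists L, (forall b, b \in L -> MB b) /\ r = \sum_(b <- L) b.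
Proof.
have [p <-] := hpis r; case: he => _ _ _ /(_ p) [s [c ->]] _.
exists [seq pi (iP (c a) * e a) | a <- s]; split; last by rewrite big_map rmorph_sum.
elim: s => [|a s IH] b //=; rewrite inE => /orP[/eqP ->|/IH //].
by exists (c a), a.
Qed.

Lemma berk_Bbullet w c a : berk v iR w -> w (pi (iP c * e a)) = v c * w (pi (e a)).
Proof. by case=> _ [_ [_ [wM [_ wk]]]]; rewrite rmorphM hpik wM wk. Qed.

Lemma tropKP_continuous : continuous trop.
Proof. by apply: continuous_into_ptws => a; exact: ptws_eval_continuous. Qed.

Lemma bend_precomp_Bbullet_hom (f : {ptws bend v iR setT -> K}) : bend_hom f -> bend_hom (bend_precomp MB f).
Proof. exact: (@bend_precomp_hom K k v R iR hv MB f Bbullet1 Bbullet_mul). Qed.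

Definition trop_of_hom (f : {ptws bend v iR MB -> K}) : {ptws A0 gens -> K} :=
  fun a => f (cls v iR MB [:: (1, pi (e a))]).

Lemma trop_of_hom_continuous : continuous trop_of_hom.
Proof. by apply: continuous_into_ptws => a; exact: ptws_eval_continuous. Qed.

Lemma trop_of_bend_hom_of w : berk v iR w ->
  trop_of_hom (bend_hom_of MB w) = trop w.
Proof.
move=> bw; apply/funext => a.
rewrite /trop_of_hom bend_hom_of_cls //.
- by case: bw => w_ge0 _; rewrite fmax1 ?mulr1 // mulr1 w_ge0.
- exact: Bbullet_mul.
- exact/valid1/Bbullet_e.
Qed.

Lemma tropKP_bend w : berk v iR w ->
  trop w = trop_of_hom (bend_precomp MB (bend_hom_of setT w)).
Proof.
move=> bw; rewrite -trop_of_bend_hom_of //; congr trop_of_hom.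
apply/funext => X; rewrite /bend_precomp /bend_incl bend_hom_of_cls //.
exact: valid_sub (rep_valid (X := X)).
Qed.

Lemma bend_hom_Bbullet f : bend_hom f -> exists2 w, berk v iR w & f = bend_hom_of MB w.
Proof.
move=> hf.
have [w [w_ge0 w1 wM wD wMB]] := mult_seminorm_extension Bbullet0 Bbullet1
  Bbullet_mul (fun m _ => hom_val_ge0 hf m) (hom_val1 hf) (hom_valM hf)
  (hom_val_bend Bbullet1 hf) Bbullet_sum.
exists w.
  have MiR c : MB (iR c) by exists c, A0_one; rewrite e_one mulr1 hpik.
  have w0 : w 0 = 0 by rewrite (wMB _ Bbullet0) (hom_val0 Bbullet1 hf Bbullet0).
  have wk c : w (iR c) = v c by rewrite (wMB _ (MiR c)) (hom_val_iR hv Bbullet1 hf (MiR c)).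
  exact: (conj w_ge0 (conj w0 (conj w1 (conj wM (conj wD wk))))).
apply/funext => X; rewrite -[in LHS](cls_rep X) (hom_cls_fmax Bbullet1 hf (rep_valid (X := X))).
by apply: eq_in_fmax => p /(rep_valid (X := X)) [_ Mp]; rewrite wMB.
Qed.

Lemma Bbullet_decomp_ex r : exists ca : k * A0 gens, MB r -> r = pi (iP ca.1 * e ca.2).
Proof. by case: (pselect (MB r)) => [[c [a ->]]|nM]; [exists (c, a)|exists (0, A0_one)]. Qed.

Definition Bbullet_decomp (r : R) : k * A0 gens := proj1_sig (cid (Bbullet_decomp_ex r)).

Lemma Bbullet_decompP r : MB r -> r = pi (iP (Bbullet_decomp r).1 * e (Bbullet_decomp r).2).
Proof. exact: (proj2_sig (cid (Bbullet_decomp_ex r))). Qed.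

Definition hom_of_trop (u : {ptws A0 gens -> K}) : {ptws bend v iR MB -> K} :=
  bend_hom_of MB (fun r => u (Bbullet_decomp r).2 * v (Bbullet_decomp r).1).

Lemma hom_of_trop_continuous : continuous hom_of_trop.
Proof.
apply: continuous_into_ptws => X; apply: continuous_fmax => r u.
exact: cvgMr_tmp (@ptws_eval_continuous _ K (Bbullet_decomp r).2 u).
Qed.

Lemma hom_of_tropKP w : berk v iR w -> hom_of_trop (trop w) = bend_hom_of MB w.
Proof.
move=> bw; apply/funext => X; apply: eq_in_fmax => p /(rep_valid (X := X)) [_ Mp].
by rewrite [in RHS](Bbullet_decompP Mp) berk_Bbullet // mulrC.
Qed.

Lemma trop_homeo :
  homeo_on [set f : {ptws bend v iR MB -> K} | bend_hom f]
    (trop @` [set w | berk v iR w]) trop_of_hom.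
Proof.
split; first by move=> f /bend_hom_Bbullet [w bw ->]; exists w; rewrite ?trop_of_bend_hom_of.
exists hom_of_trop; split.
- move=> _ [w bw <-]; rewrite hom_of_tropKP //.
  exact: bend_hom_of_hom Bbullet1 Bbullet_mul bw.
- by move=> f /bend_hom_Bbullet [w bw ->]; rewrite trop_of_bend_hom_of // hom_of_tropKP.
- by move=> _ [w bw <-]; rewrite hom_of_tropKP // trop_of_bend_hom_of.
- exact/continuous_subspaceT/trop_of_hom_continuous.
- exact/continuous_subspaceT/hom_of_trop_continuous.
Qed.

End Toric.

Unset Implicit Arguments.
Set Strict Implicit.

Theorem theoremC (K : realType) (k : fieldType) (v : k -> K)
  (hv : nonarch_abs v)
  (n : nat) (gens : seq 'rV[int]_n)
  (P : comPzRingType) (iP : {rmorphism k -> P}) (e : A0 gens -> P)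
  (he : is_monoid_algebra iP e)
  (R : comPzRingType) (iR : {rmorphism k -> R})
  (pi : {rmorphism P -> R}) (hpik : forall c, pi (iP c) = iR c)
  (hpis : forall r : R, exists p : P, pi p = r) :
  let Yan := [set w : {ptws R -> K} | berk v iR w] in
  let trop := tropKP (K := K) pi e in
  let Trop := trop @` Yan in
  let MB := Bbullet iP pi e in
  let HomR := [set f : {ptws bend v iR setT -> K} | bend_hom f] in
  let HomB := [set f : {ptws bend v iR MB -> K} | bend_hom f] in
  let Psi := fun f : {ptws bend v iR MB -> K} =>
    ((fun a : A0 gens => f (cls v iR MB [:: (1, pi (e a))])) : {ptws A0 gens -> K}) in
  let pre := fun f : {ptws bend v iR setT -> K} =>
    ((fun X : bend v iR MB => f (bend_incl X)) : {ptws bend v iR MB -> K}) in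
  (* (1) Y^an is homeomorphic to Hom_T(Bend_v(R), T) via w |-> (r (x) t |-> w(r) t) *)
  (exists Phi : {ptws R -> K} -> {ptws bend v iR setT -> K},
     [/\ homeo_on Yan HomR Phi,
         (forall w, Yan w -> forall (r : R) (t : K), 0 <= t ->
            Phi w (cls v iR setT [:: (t, r)]) = w r * t) &
     (* (3) commutativity of the square *)
         (forall w, Yan w -> trop w = Psi (pre (Phi w)))])
  (* (2) Trop^KP(Y) is homeomorphic to Hom_T(Bend_v(B), T) via Psi *)
  /\ homeo_on HomB Trop Psi
  (* (3) the top and bottom arrows are continuous maps between these spaces *)
  /\ ((forall w, Yan w -> Trop (trop w)) /\ {within Yan, continuous trop})
  /\ ((forall f, HomR f -> HomB (pre f)) /\ {within HomR, continuous pre}).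
Proof.
move=> Yan trop Trop MB HomR HomB Psi pre.
split.
  exists (@bend_hom_of K k v R iR setT); split.
  - exact: berk_homeo_bend.
  - move=> w bw r t t0; rewrite bend_hom_of_cls //; last exact: valid1.
    by case: bw => w_ge0 _; rewrite fmax1 // mulr_ge0.
  - exact: tropKP_bend.
split; first exact: trop_homeo.
split; first by split; [move=> w bw; exists w|exact/continuous_subspaceT/tropKP_continuous].
split; first by move=> f; exact: bend_precomp_Bbullet_hom.
exact/continuous_subspaceT/bend_precomp_continuous.
Qed.
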